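(* Every strict gammoid has weak canonical bases over closed sets. That is, if $\mathcal A=(A,\mathrm{cl})$ is a matroid with a presentation $(A;R)\in\mathcal C$, $B$ is a closed set of $\mathcal A$ and $\bar a$ is a finite tuple of elements of $A$, then there is a closed set $B_0\subseteq B$ such that for every closed set $B_1\subseteq B$: $d(\bar a/B_1)=d(\bar a/B)$ if and only if $B_0\subseteq B_1$.
   Context: A set system is a pair $(A;R)$ where $R$ is a set of finite non-empty subsets of $A$; for $X\subseteq A$, $R[X]=\{r\in R:r\subseteq X\}$ and $\delta(X)=|X|-|R[X]|$. $\mathcal C$ is the class of finite set systems with $\delta(X)\ge0$ for all $X\subseteq A$. For $(A;R)\in\mathcal C$, $d(X)=\min\{\delta(Y):X\subseteq Y\subseteq A\}$, $\mathrm{cl}(X)=\{y:d(X\cup\{y\})=d(X)\}$, and $PG(A;R)$ is the matroid $(A,\mathrm{cl})$ with rank function $d$; $(A;R)$ is a presentation of $\mathcal A$ if $PG(A;R)=\mathcal A$. Strict gammoids are exactly the matroids having such a presentation. A closed set is $F$ with $\mathrm{cl}(F)=F$. For a closed set $B$ and a finite tuple $\bar a$, $d(\bar a/B)=d(\bar aB)-d(B)$, where $\bar aB$ is the union of $B$ with the set of entries of $\bar a$. *)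

From HB Require Import structures.
From mathcomp Require Import all_boot all_order all_algebra.
Set Implicit Arguments. Unset Strict Implicit. Unset Printing Implicit Defensive.

Section SetSystems.
Variable A : finType.
Implicit Types (R : {set {set A}}) (X Y B : {set A}).

Definition Rsub R X : {set {set A}} := [set r in R | r \subset X].

Definition delta R X : int := (#|X|%:Z - #|Rsub R X|%:Z)%R.

Definition inC R : Prop :=
  (forall r, r \in R -> r != set0) /\ (forall X, (0 <= delta R X)%R).

(* delta as a natural number (agrees with delta on systems in C) *)
Definition deltaN R X : nat := #|X| - #|Rsub R X|.

Definition dmin R X : nat :=
  deltaN R [arg min_(Y < setT | X \subset Y) deltaN R Y].

Definition cl R X : {set A} := [set y | dmin R (y |: X) == dmin R X].

Definition is_closed R X : bool := cl R X == X.

Definition drel R (a : seq A) B : int :=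
  ((dmin R (B :|: [set x in a]))%:Z - (dmin R B)%:Z)%R.

End SetSystems.

From HB Require Import structures.
From mathcomp Require Import all_boot all_order all_algebra.
From mathcomp Require Import zify.
Import GRing.Theory Num.Theory.

Set Implicit Arguments.
Unset Strict Implicit.
Unset Printing Implicit Defensive.

(* Write D = deltaN and d = dmin, and let S be the set of entries of the
   tuple.  Everything rests on the submodularity of D:
     D (X u Y) + D (X n Y) + #(relations of X u Y lying in neither part)
       = D X + D Y.
   From it we get: a closed set X satisfies D X = d X and contains every
   minimiser of D above any of its subsets, so closed sets are stable
   under intersection; the relative rank d(S/X) = d(S u X) - d(X) can only
   grow when X shrinks among subsets of the closed set B; and the closed
   subsets X of B with d(S/X) = d(S/B) are closed under intersection.
   The canonical base B0 is then a closed subset of B of least size with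
   d(S/B0) = d(S/B): for any other such B1, B0 n B1 is again one, so by
   minimality B0 is contained in B1; conversely B0 <= B1 <= B forces
   d(S/B1) = d(S/B) by monotonicity. *)

Section SetSystem.
Variable A : finType.
Variable R : {set {set A}}.

Hypothesis delta_ge0 : forall X : {set A}, #|Rsub R X| <= #|X|.

Local Notation D := (deltaN R).
Local Notation d := (dmin R).

Definition modular_pair (X Y : {set A}) : bool :=
  Rsub R (X :|: Y) \subset Rsub R X :|: Rsub R Y.

Lemma deltaN_submod (X Y : {set A}) :
  D (X :|: Y) + D (X :&: Y) + #|Rsub R (X :|: Y) :\: (Rsub R X :|: Rsub R Y)|
  = D X + D Y.
Proof.
have RsubI : Rsub R (X :&: Y) = Rsub R X :&: Rsub R Y.
  by apply/setP=> r; rewrite !inE subsetI; case: (r \in R).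
have RsubU : Rsub R X :|: Rsub R Y \subset Rsub R (X :|: Y).
  apply/subsetP=> r; rewrite !inE => /orP[] /andP[-> rS] /=.
  - exact: subset_trans rS (subsetUl _ _).
  - exact: subset_trans rS (subsetUr _ _).
have cardXY := cardsUI X Y.
have cardR := cardsUI (Rsub R X) (Rsub R Y).
have cardD := cardsID (Rsub R X :|: Rsub R Y) (Rsub R (X :|: Y)).
rewrite (setIidPr RsubU) in cardD.
have := delta_ge0 X; have := delta_ge0 Y.
have := delta_ge0 (X :|: Y); have := delta_ge0 (X :&: Y).
rewrite /deltaN RsubI; lia.
Qed.

Lemma deltaN_modular {X Y : {set A}} :
  modular_pair X Y -> D (X :|: Y) + D (X :&: Y) = D X + D Y.
Proof.
move=> mXY; have := deltaN_submod X Y.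
by rewrite (eqP (_ : _ :\: _ == set0)) ?cards0 ?addn0 // setD_eq0.
Qed.

Lemma modular_pairI {Y1 Y2 B : {set A}} :
  modular_pair Y1 B -> modular_pair Y2 B -> modular_pair (Y1 :&: Y2) B.
Proof.
move=> /subsetP m1 /subsetP m2; apply/subsetP=> r.
rewrite !inE => /andP[rR rS].
have rS1 : r \subset Y1 :|: B by apply: subset_trans rS (setSU _ (subsetIl _ _)).
have rS2 : r \subset Y2 :|: B by apply: subset_trans rS (setSU _ (subsetIr _ _)).
have := m1 r; have := m2 r; rewrite !inE rR rS1 rS2 /=.
by case: (r \subset B); rewrite ?orbT // !orbF subsetI => -> // ->.
Qed.

Lemma dmin_le {X Y : {set A}} : X \subset Y -> d X <= D Y.
Proof.
move=> XY; rewrite /dmin.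
by case: arg_minnP => [|Y0 _ /(_ Y XY)] //; exact: subsetT.
Qed.

Lemma dmin_attained (X : {set A}) : exists2 Y : {set A}, X \subset Y & D Y = d X.
Proof.
rewrite /dmin; case: arg_minnP => [|Y0 XY0 _]; first exact: subsetT.
by exists Y0.
Qed.

Lemma dmin_mono {X Y : {set A}} : X \subset Y -> d X <= d Y.
Proof.
move=> XY; have [Z YZ <-] := dmin_attained Y.
exact/dmin_le/(subset_trans XY).
Qed.

Lemma in_cl (X : {set A}) y : d (y |: X) <= d X -> y \in cl R X.
Proof. by move=> h; rewrite inE eqn_leq h dmin_mono // subsetUr. Qed.

Lemma closed_deltaN {X : {set A}} : is_closed R X -> D X = d X.
Proof.
move=> /eqP clX; have [Y XY DY] := dmin_attained X.
suff YX : Y = X by rewrite -{1}YX.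
apply/eqP; rewrite eqEsubset andbC XY; apply/subsetP=> y yY.
rewrite -clX; apply: in_cl; rewrite -DY.
by apply: dmin_le; rewrite subUset sub1set yY XY.
Qed.

(* If C <= X with X closed, every minimiser Y of D above C lies in X:
   by submodularity, X u Y has the same d as X. *)
Lemma minimiser_sub_closed {X C Y : {set A}} :
  is_closed R X -> C \subset X -> C \subset Y -> D Y = d C -> Y \subset X.
Proof.
move=> cX CX CY DY; apply/subsetP=> y yY.
rewrite -(eqP cX); apply: in_cl.
have := deltaN_submod Y X; have := closed_deltaN cX.
have : d C <= D (Y :&: X) by apply: dmin_le; rewrite subsetI CY CX.
have : d (y |: X) <= D (Y :|: X).
  by apply: dmin_le; rewrite subUset sub1set inE yY subsetUr.
lia.
Qed.

Lemma closedI {X1 X2 : {set A}} :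
  is_closed R X1 -> is_closed R X2 -> is_closed R (X1 :&: X2).
Proof.
move=> c1 c2; rewrite /is_closed eqEsubset; apply/andP; split.
  apply/subsetP=> y; rewrite inE => /eqP dy.
  have [Y yXY DY] := dmin_attained (y |: (X1 :&: X2)); rewrite dy in DY.
  have XY : X1 :&: X2 \subset Y := subset_trans (subsetUr _ _) yXY.
  have yY : y \in Y by apply: (subsetP yXY); rewrite !inE eqxx.
  have /subsetP s1 := minimiser_sub_closed c1 (subsetIl _ _) XY DY.
  have /subsetP s2 := minimiser_sub_closed c2 (subsetIr _ _) XY DY.
  by rewrite inE s1 ?s2.
apply/subsetP=> y yX; apply: in_cl.
by rewrite (setUidPr _) // sub1set.
Qed.

(* Relative rank over the closed set B, for a fixed set S (the entries of
   the tuple).  Relative ranks are compared additively, avoiding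
   truncated subtraction. *)
Variables (S B : {set A}).
Hypothesis closedB : is_closed R B.

Definition same_rel (X : {set A}) : Prop :=
  d (X :|: S) + d B = d (B :|: S) + d X.

Lemma rel_rank_antitone {C : {set A}} :
  C \subset B -> d (B :|: S) + d C <= d (C :|: S) + d B.
Proof.
move=> CB; have [Y CSY DY] := dmin_attained (C :|: S).
have CY : C \subset Y := subset_trans (subsetUl _ _) CSY.
have SY : S \subset Y := subset_trans (subsetUr _ _) CSY.
have := deltaN_submod Y B; have := closed_deltaN closedB.
have : d C <= D (Y :&: B) by apply: dmin_le; rewrite subsetI CY CB.
have : d (B :|: S) <= D (Y :|: B).
  by apply: dmin_le; rewrite subUset subsetUr (subset_trans SY) ?subsetUl.
lia.
Qed.

Lemma same_rel_witness {B1 : {set A}} :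
  is_closed R B1 -> B1 \subset B -> same_rel B1 ->
  exists Y : {set A}, [/\ B1 :|: S \subset Y, D Y = d (B1 :|: S),
     Y :&: B \subset B1, D (Y :|: B) = d (B :|: S) & modular_pair Y B].
Proof.
rewrite /same_rel => c1 B1B rel1; have [Y B1SY DY] := dmin_attained (B1 :|: S).
have B1Y : B1 \subset Y := subset_trans (subsetUl _ _) B1SY.
have SY : S \subset Y := subset_trans (subsetUr _ _) B1SY.
have sub := deltaN_submod Y B; have DB := closed_deltaN closedB.
have le1 : d B1 <= D (Y :&: B) by apply: dmin_le; rewrite subsetI B1Y B1B.
have le2 : d (B :|: S) <= D (Y :|: B).
  by apply: dmin_le; rewrite subUset subsetUr (subset_trans SY) ?subsetUl.
exists Y; split=> //.
- by apply: (minimiser_sub_closed c1 (subxx _)); rewrite ?subsetI ?B1Y //; lia.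
- lia.
- by rewrite /modular_pair -setD_eq0 -cards_eq0; apply/eqP; lia.
Qed.

(* The closed subsets of B with the same relative rank are closed under
   intersection: glue the two witnesses along their intersection. *)
Lemma same_relI {B1 B2 : {set A}} :
  is_closed R B1 -> B1 \subset B -> same_rel B1 ->
  is_closed R B2 -> B2 \subset B -> same_rel B2 ->
  same_rel (B1 :&: B2).
Proof.
move=> c1 B1B rel1 c2 B2B rel2.
have [Y1 [sY1 DY1 Y1B DY1B m1]] := same_rel_witness c1 B1B rel1.
have [Y2 [sY2 DY2 Y2B DY2B m2]] := same_rel_witness c2 B2B rel2.
set W := Y1 :&: Y2.
have sW : (B1 :&: B2) :|: S \subset W.
  rewrite subsetI (subset_trans _ sY1) ?(subset_trans _ sY2) //.
  - exact/setSU/subsetIr.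
  - exact/setSU/subsetIl.
have WB : W :&: B = B1 :&: B2.
  apply/eqP; rewrite eqEsubset !subsetI; apply/andP; split; apply/andP; split.
  - by apply: subset_trans Y1B; rewrite setSI // subsetIl.
  - by apply: subset_trans Y2B; rewrite setSI // subsetIr.
  - by rewrite -subsetI; apply: subset_trans (subsetUl _ _) sW.
  - exact: subset_trans (subsetIl _ _) B1B.
have YBI : (Y1 :|: B) :&: (Y2 :|: B) = W :|: B by rewrite -setUIl.
have sub12 := deltaN_submod (Y1 :|: B) (Y2 :|: B); rewrite YBI in sub12.
have modW : D (W :|: B) + D (B1 :&: B2) = D W + D B.
  by rewrite -WB; apply/deltaN_modular/modular_pairI.
have leU : d (B :|: S) <= D ((Y1 :|: B) :|: (Y2 :|: B)).
  apply: dmin_le; apply: subset_trans (subsetUl _ (Y2 :|: B)).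
  rewrite subUset subsetUr /=; apply: subset_trans (subsetUl _ B).
  exact: subset_trans (subsetUr _ _) sY1.
have leW : d ((B1 :&: B2) :|: S) <= D W := dmin_le sW.
have := rel_rank_antitone (subset_trans (subsetIl B1 B2) B1B).
have := closed_deltaN (closedI c1 c2); have := closed_deltaN closedB.
rewrite /same_rel; lia.
Qed.

End SetSystem.

Theorem theorem6p1 (A : finType) (R : {set {set A}}) :
  inC R ->
  forall (B : {set A}), is_closed R B ->
  forall (a : seq A),
  exists B0 : {set A},
    [/\ is_closed R B0, B0 \subset B &
      forall B1 : {set A}, is_closed R B1 -> B1 \subset B ->
        (drel R a B1 = drel R a B <-> B0 \subset B1)].
Proof.
move=> [_ deltaC] B cB a.
have delta_ge0 (X : {set A}) : #|Rsub R X| <= #|X|.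
  by have := deltaC X; rewrite /delta subr_ge0 lez_nat.
set S := [set x in a].
have drelE X : drel R a X = drel R a B <-> same_rel R S B X.
  by rewrite /drel /same_rel -/S; split; lia.
pose good := [pred X : {set A} | [&& is_closed R X, X \subset B &
    dmin R (X :|: S) + dmin R B == dmin R (B :|: S) + dmin R X]].
have goodB : good B by rewrite /= cB subxx eqxx.
case: (arg_minnP (fun X : {set A} => #|X|) goodB) => B0 /and3P[c0 B0B /eqP rel0] min0.
exists B0; split=> // B1 c1 B1B; rewrite drelE; split=> [rel1|B01].
- have rel01 := same_relI delta_ge0 cB c0 B0B rel0 c1 B1B rel1.
  have /min0 : good (B0 :&: B1).
    by rewrite /= closedI // (subset_trans (subsetIl _ _) B0B) rel01 eqxx.
  by move=> le0; rewrite -(eqP (_ : B0 :&: B1 == B0)) ?subsetIr // eqEcard subsetIl.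
- have := rel_rank_antitone delta_ge0 S c1 B01.
  have := rel_rank_antitone delta_ge0 S cB B1B.
  rewrite /same_rel in rel0 *; lia.
Qed.
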